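(* Let $\gamma,\sigma:[a,b]\to V$ be continuous paths of bounded variation in a finite-dimensional real inner product space $V$, fix $(s,t)\in[a,b]^2$, and define $f(x):=K^{x\gamma,\sigma}(s,t)=\sum_{k\ge0}x^k\langle S(\gamma)^k_{a,s},S(\sigma)^k_{a,t}\rangle_k$ for $x\in\mathbb{R}$, where $S(\gamma)^k_{a,s}=\int_{a<u_1<\cdots<u_k<s}d\gamma_{u_1}\cdots d\gamma_{u_k}$ and $\langle\cdot,\cdot\rangle_k$ is the Hilbert–Schmidt inner product on $V^{\otimes k}$. Then $f$ is infinitely differentiable and, for every $k\in\mathbb{N}$, \[ f^{(k)}(x)=\sum_{l=0}^{\infty}x^{l}\frac{(l+k)!}{l!}\left\langle S(\gamma)_{a,s}^{l+k},S(\sigma)_{a,t}^{l+k}\right\rangle_{l+k}. \] In particular, \[ \left|f^{(k)}(x)\right|\leq\frac{L_{s}(\gamma)^{k/2}L_{t}(\sigma)^{k/2}}{|x|^{k/2}}I_{k}\left(2\sqrt{|x|L_{s}(\gamma)L_{t}(\sigma)}\right), \] where $L_s(\gamma)$ is the length of the path segment $\gamma|_{[a,s]}$, $L_t(\sigma)$ that of $\sigma|_{[a,t]}$, and $I_k$ is the modified Bessel function of the first kind of order $k$.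
   Context: $K^{\gamma,\sigma}(s,t)=\sum_{k\ge0}\langle S(\gamma)^k_{a,s},S(\sigma)^k_{a,t}\rangle_k$ is the original signature kernel, and $x\gamma$ denotes the path $u\mapsto x\gamma_u$. *)

(* V = R^d realised as row vectors 'rV[R]_d with the
   standard (Euclidean) inner product. *)
From HB Require Import structures.
From mathcomp Require Import all_boot all_order all_algebra.
From mathcomp Require Import all_classical all_reals all_analysis.
Set Implicit Arguments. Unset Strict Implicit. Unset Printing Implicit Defensive.
Import Order.TTheory GRing.Theory Num.Theory.
Import numFieldNormedType.Exports.
Local Open Scope classical_set_scope.
Local Open Scope ring_scope.

Section SigDefs.
Variable R : realType.

Definition tagged_partition (a b : R) (n : nat) (t xi : nat -> R) : Prop :=
  t 0%N = a /\ t n = b /\ (forall i, (i < n)%N -> t i <= xi i <= t i.+1).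

Definition mesh_lt (n : nat) (t : nat -> R) (delta : R) : Prop :=
  forall i, (i < n)%N -> t i.+1 - t i < delta.

Definition RS_sum (f g : R -> R) (n : nat) (t xi : nat -> R) : R :=
  \sum_(i < n) f (xi i) * (g (t i.+1) - g (t i)).

Definition is_RS_integral (f g : R -> R) (a b I : R) : Prop :=
  forall e : R, 0 < e -> exists2 delta : R, 0 < delta &
    forall n t xi, tagged_partition a b n t xi -> mesh_lt n t delta ->
      `|RS_sum f g n t xi - I| < e.

Definition RS_integral (f g : R -> R) (a b : R) : R :=
  xget 0 [set I | is_RS_integral f g a b I].

Variable d : nat.
Definition vec := 'rV[R]_d.

Definition coord (g : R -> vec) (i : 'I_d) : R -> R := fun u => g u 0 i.

Definition enorm (v : vec) : R := Num.sqrt (\sum_i v 0 i ^+ 2).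

Definition partition (a b : R) (n : nat) (t : nat -> R) : Prop :=
  t 0%N = a /\ t n = b /\ (forall i, (i < n)%N -> t i <= t i.+1).

Definition variation_sums (g : R -> vec) (a b : R) : set R :=
  [set y | exists n t, partition a b n t /\
     y = \sum_(i < n) enorm (g (t i.+1) - g (t i))].

Definition bounded_variation_path (g : R -> vec) (a b : R) : Prop :=
  has_ubound (variation_sums g a b).

Definition path_length (g : R -> vec) (a b : R) : R := sup (variation_sums g a b).

(* sig_rev g a [:: i_k; ...; i_1] s
     = int_{a<u_1<...<u_k<s} d g^{i_1}_{u_1} ... d g^{i_k}_{u_k}
   (the word is stored reversed so that the last letter is integrated last) *)
Fixpoint sig_rev (g : R -> vec) (a : R) (w : seq 'I_d) : R -> R :=
  match w with
  | [::] => fun _ => 1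
  | i :: w' => fun s => RS_integral (sig_rev g a w') (coord g i) a s
  end.

(* coefficient of e_{i_1} (x) ... (x) e_{i_k} in S(g)^k_{a,s}, w = (i_1,...,i_k) *)
Definition sig_coef (g : R -> vec) (a s : R) (k : nat) (w : k.-tuple 'I_d) : R :=
  sig_rev g a (rev w) s.

(* Hilbert--Schmidt inner product < S(g)^k_{a,s}, S(h)^k_{a,t} >_k
   (the e_w, w words of length k, form an orthonormal basis of V^{(x)k}) *)
Definition sig_inner (g h : R -> vec) (a s t : R) (k : nat) : R :=
  \sum_(w : k.-tuple 'I_d) sig_coef g a s w * sig_coef h a t w.

Definition sig_kernel (g h : R -> vec) (a s t : R) : R :=
  limn (series (sig_inner g h a s t)).

End SigDefs.

Definition besselI {R : realType} (k : nat) (z : R) : R :=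
  limn (series (fun m : nat => (z / 2) ^+ (2 * m + k) / ((m`!)%:R * ((m + k)`!)%:R))).

From Pilot Require Import Defs.
From HB Require Import structures.
From mathcomp Require Import all_boot all_order all_algebra.
From mathcomp Require Import all_classical all_reals all_analysis.
From mathcomp Require Import ring lra.
Set Implicit Arguments. Unset Strict Implicit. Unset Printing Implicit Defensive.
Import Order.TTheory GRing.Theory Num.Theory.
Import numFieldNormedType.Exports.
Local Open Scope classical_set_scope.
Local Open Scope ring_scope.

(* Level k of the signature has l2 norm at most [L ^ k / k!], [L] the length of
   the path up to the endpoint: a Riemann-Stieltjes sum of level [k + 1] is a sum
   of tensors [S^k(t_j) (x) (g t_(j+1) - g t_j)], so by the bound at level [k] it
   is dominated by a left Riemann sum of [x ^ k / k!] in the variable [L], which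
   telescopes.  By Cauchy-Schwarz the coefficients [c_k] of
   [f x = sum_k c_k x ^ k] (scaling the path by [x] scales [S^k] by [x ^ k])
   satisfy [|c_k| <= M ^ k / (k!) ^ 2], [M = L(gamma) L(sigma)].  Hence [f] is
   entire and is differentiated termwise, and the termwise majorant
   [sum_l M ^ (l + k) |x| ^ l / (l! (l + k)!)] of [f^(k) x] is the Bessel
   expression.
   [RS_integral] is [0] where the integral does not exist, and [0] satisfies
   every bound used. *)

Section L2Norm.
Context {R : rcfType} {T : finType}.
Implicit Types f h : T -> R.

Definition l2norm f : R := Num.sqrt (\sum_x f x ^+ 2).

Lemma sumr_sqr_ge0 f : 0 <= \sum_x f x ^+ 2.
Proof. by apply: sumr_ge0 => x _; exact: sqr_ge0. Qed.

Lemma eq_l2norm f h : f =1 h -> l2norm f = l2norm h.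
Proof. by move/funext->. Qed.

Lemma l2norm_ge0 f : 0 <= l2norm f.
Proof. exact: sqrtr_ge0. Qed.

Lemma l2norm_sqr f : l2norm f ^+ 2 = \sum_x f x ^+ 2.
Proof. by rewrite sqr_sqrtr // sumr_sqr_ge0. Qed.

Lemma l2norm_eq0 f : l2norm f = 0 -> f =1 0.
Proof.
move=> f0 x; apply/eqP; rewrite -sqrf_eq0 eq_le sqr_ge0 andbT.
have <- : l2norm f ^+ 2 = 0 by rewrite f0 expr0n.
by rewrite l2norm_sqr (bigD1 x) //= lerDl sumr_ge0 // => y _; exact: sqr_ge0.
Qed.

Lemma ler_sum_mul_l2norm f h : \sum_x f x * h x <= l2norm f * l2norm h.
Proof.
set A := l2norm f; set B := l2norm h.
have [AB0|ABpos] := eqVneq (A * B) 0.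
  have /orP[/eqP/l2norm_eq0 f0|/eqP/l2norm_eq0 h0] : (A == 0) || (B == 0).
    by rewrite -mulf_eq0 AB0.
  - by rewrite big1 ?AB0 // => x _; rewrite f0 mul0r.
  - by rewrite big1 ?AB0 // => x _; rewrite h0 mulr0.
have ABgt0 : 0 < A * B by rewrite lt0r ABpos mulr_ge0 ?l2norm_ge0.
have expand : \sum_x (B * f x - A * h x) ^+ 2 =
    2 * (A * B) * (A * B - \sum_x f x * h x).
  have -> : \sum_x (B * f x - A * h x) ^+ 2 = B ^+ 2 * \sum_x f x ^+ 2 +
      A ^+ 2 * \sum_x h x ^+ 2 - 2 * (A * B) * \sum_x f x * h x.
    by rewrite !mulr_sumr -big_split -sumrB; apply: eq_bigr => x _ /=; ring.
  by rewrite -(l2norm_sqr f) -(l2norm_sqr h) -/A -/B; ring.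
have : 0 <= 2 * (A * B) * (A * B - \sum_x f x * h x) by rewrite -expand sumr_sqr_ge0.
by rewrite pmulr_rge0 ?subr_ge0 // mulr_gt0.
Qed.

Lemma l2normD f h : l2norm (f \+ h) <= l2norm f + l2norm h.
Proof.
rewrite -(ler_pXn2r (_ : 0 < 2)%N) ?nnegrE ?addr_ge0 ?l2norm_ge0 //.
rewrite sqrrD !l2norm_sqr.
rewrite (_ : \sum_x (f \+ h) x ^+ 2 =
    \sum_x f x ^+ 2 + (\sum_x f x * h x) *+ 2 + \sum_x h x ^+ 2); last first.
  by rewrite -mulr_natr mulr_suml -!big_split /=; apply: eq_bigr => x _; ring.
by rewrite lerD2r lerD2l lerMn2r ler_sum_mul_l2norm.
Qed.

Lemma l2norm_sum (n : nat) (F : 'I_n -> T -> R) :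
  l2norm (fun x => \sum_(j < n) F j x) <= \sum_(j < n) l2norm (F j).
Proof.
elim: n F => [|n IH] F.
  by rewrite big_ord0 /l2norm big1 ?sqrtr0 // => x _; rewrite big_ord0 expr0n.
rewrite big_ord_recr /=.
apply: le_trans (lerD (IH (fun j => F (widen_ord (leqnSn n) j))) (lexx _)).
by under eq_fun do rewrite big_ord_recr; exact: l2normD.
Qed.

Lemma l2norm_le f h : (forall x, `|f x| <= h x) -> l2norm f <= l2norm h.
Proof.
move=> fh; rewrite ler_sqrt ?sumr_sqr_ge0 //; apply: ler_sum => x _.
by rewrite -real_normK ?num_real // lerXn2r ?nnegrE // (le_trans _ (fh x)).
Qed.

Lemma l2norm_cst (e : R) : 0 <= e -> l2norm (fun=> e) = e * Num.sqrt #|T|%:R.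
Proof.
move=> e0; rewrite /l2norm sumr_const -[e ^+ 2 *+ _]mulr_natl sqrtrM ?ler0n //.
by rewrite sqrtr_sqr ger0_norm // mulrC.
Qed.

Lemma l2norm_norm f : l2norm (fun x => `|f x|) = l2norm f.
Proof. by congr Num.sqrt; apply: eq_bigr => x _; rewrite real_normK ?num_real. Qed.

End L2Norm.

Lemma big_tupleS {V : nmodType} {T : finType} (k : nat) (F : k.+1.-tuple T -> V) :
  \sum_(w : k.+1.-tuple T) F w = \sum_(i : T) \sum_(w : k.-tuple T) F [tuple of i :: w].
Proof.
rewrite pair_big /= (reindex (fun p : T * k.-tuple T => [tuple of p.1 :: p.2])) //.
exists (fun w : k.+1.-tuple T => (thead w, [tuple of behead w])).
  by move=> [i w] _; rewrite /= theadE; congr pair; exact: val_inj.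
by move=> w _ /=; rewrite -tuple_eta.
Qed.

(* [fun w => A (behead w) * v (thead w)] is [v (x) A] in the basis of words *)
Lemma l2norm_tensor {R : rcfType} {T : finType} (k : nat) (A : seq T -> R) (v : T -> R) :
  l2norm (fun w : k.+1.-tuple T => A (behead w) * v (thead w)) =
  l2norm (fun w : k.-tuple T => A w) * l2norm v.
Proof.
rewrite /l2norm -sqrtrM ?sumr_sqr_ge0 //; congr Num.sqrt.
rewrite big_tupleS mulrC mulr_suml; apply: eq_bigr => i _.
by rewrite mulr_sumr; apply: eq_bigr => w _; rewrite /= theadE exprMn mulrC.
Qed.

Section Partitions.
Context {R : realType}.
Implicit Types (a u : R) (t xi : nat -> R).

Lemma partition_le a u n t : Defs.partition a u n t ->
  forall i j, (i <= j <= n)%N -> t i <= t j.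
Proof.
move=> [_ [_ tS]] i; elim=> [|j IH] /andP[ij jn].
  by move: ij; rewrite leqn0 => /eqP->.
move: ij; rewrite leq_eqVlt => /orP[/eqP->//|ij].
by apply: le_trans (IH _) (tS _ jn); rewrite -ltnS ij ltnW.
Qed.

Lemma partition_range a u n t : Defs.partition a u n t ->
  forall j, (j <= n)%N -> a <= t j <= u.
Proof.
move=> P j jn; have [t0 [tn _]] := P.
rewrite -{1}t0 -tn; apply/andP; split; apply: (partition_le P); by rewrite jn ?leqnn.
Qed.

Lemma tagged_partition_partition a u n t xi :
  tagged_partition a u n t xi -> Defs.partition a u n t.
Proof.
by move=> [t0 [tn txi]]; do 2!split=> //; move=> i /txi /andP[] /le_trans; apply.
Qed.

Lemma tagged_partition_tag_range a u n t xi : tagged_partition a u n t xi ->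
  forall j, (j < n)%N -> a <= xi j <= u.
Proof.
move=> T j jn; have /partition_range rg := tagged_partition_partition T.
have [_ [_ /(_ j jn) /andP[tx xt]]] := T.
have /andP[aj _] := rg j (ltnW jn); have /andP[_ ju] := rg j.+1 jn.
by rewrite (le_trans aj tx) (le_trans xt ju).
Qed.

Definition uniform_partition a u n j : R := a + j%:R * (u - a) / n.+1%:R.

Lemma uniform_partitionS a u n j :
  uniform_partition a u n j.+1 - uniform_partition a u n j = (u - a) / n.+1%:R.
Proof. by rewrite /uniform_partition -nat1r; field. Qed.

Lemma uniform_tagged_partition a u n : a <= u ->
  tagged_partition a u n.+1 (uniform_partition a u n) (uniform_partition a u n).
Proof.
move=> au; split; first by rewrite /uniform_partition !mul0r addr0.
split; first by rewrite /uniform_partition mulrAC divff ?mul1r ?pnatr_eq0 // addrC subrK.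
move=> i _; rewrite lexx /= -subr_ge0 uniform_partitionS.
by rewrite divr_ge0 // subr_ge0.
Qed.

Lemma uniform_partition_mesh a u delta : 0 < delta ->
  \forall n \near \oo, mesh_lt n.+1 (uniform_partition a u n) delta.
Proof.
move=> d0; exists (Num.truncn ((u - a) / delta)) => // n /= Nn i _.
rewrite uniform_partitionS ltr_pdivrMr ?ltr0n // mulrC -ltr_pdivrMr //.
by apply: lt_le_trans (truncnS_gt _) _; rewrite ler_nat ltnS.
Qed.

End Partitions.

Section PathLength.
Context {R : realType} {d : nat}.
Variable g : R -> 'rV[R]_d.

Lemma enorm_ge0 (v : 'rV[R]_d) : 0 <= enorm v.
Proof. exact: sqrtr_ge0. Qed.

Lemma variation_sums_rcons a u v n t : Defs.partition a u n t -> u <= v ->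
  variation_sums g a v (\sum_(i < n) enorm (g (t i.+1) - g (t i)) + enorm (g v - g u)).
Proof.
move=> [t0 [tn tS]] uv.
exists n.+1, (fun i => if (i <= n)%N then t i else v); split.
  split=> //; split; first by rewrite ltnn.
  move=> i; rewrite ltnS leq_eqVlt => /orP[/eqP->|lin].
    by rewrite eqxx ltnn /= tn.
  by rewrite lin orbT; exact: tS.
rewrite big_ord_recr /= leqnn ltnn tn; congr (_ + _).
by apply: eq_bigr => i _; rewrite ltn_ord ltnW.
Qed.

Lemma variation_sums_chord a u : a <= u -> variation_sums g a u (enorm (g u - g a)).
Proof.
move=> au; exists 1%N, (fun i => if i == 0%N then a else u); split; last by rewrite big_ord1.
by split=> //; split=> // i; rewrite ltnS leqn0 => /eqP->.
Qed.

Variables a b : R.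
Hypothesis g_bv : bounded_variation_path g a b.

Lemma variation_sums_ubound v : v <= b -> has_ubound (variation_sums g a v).
Proof.
move: g_bv => [M gM] vb; exists M => _ [n [t [P ->]]].
by apply: le_trans (gM _ (variation_sums_rcons P vb)); rewrite lerDl enorm_ge0.
Qed.

Lemma path_length_ge0 u : a <= u -> u <= b -> 0 <= path_length g a u.
Proof.
move=> au ub.
have := ub_le_sup (variation_sums_ubound ub) (variation_sums_chord au).
exact/le_trans/enorm_ge0.
Qed.

Lemma path_length_chord u v : a <= u -> u <= v -> v <= b ->
  path_length g a u + enorm (g v - g u) <= path_length g a v.
Proof.
move=> au uv vb; rewrite -lerBrDr; apply: ge_sup.
  by exists (enorm (g u - g a)); exact: variation_sums_chord.
move=> _ [n [t [P ->]]]; rewrite lerBrDr.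
exact: (ub_le_sup (variation_sums_ubound vb)) (variation_sums_rcons P uv).
Qed.

End PathLength.

(* one step of a left Riemann sum of [x ^ k / k!] *)
Lemma ler_pow_fact_step {R : realFieldType} (p q : R) (k : nat) : 0 <= p -> p <= q ->
  p ^+ k / k`!%:R * (q - p) <= (q ^+ k.+1 - p ^+ k.+1) / k.+1`!%:R.
Proof.
move=> p0 pq.
have S : k.+1%:R * p ^+ k <= \sum_(i < k.+1) q ^+ (k.+1.-1 - i) * p ^+ i.
  rewrite -[X in X%:R]card_ord -sum1_card natr_sum mulr_suml.
  apply: ler_sum => i _; rewrite mul1r /=.
  have ik : (i <= k)%N by rewrite -ltnS ltn_ord.
  rewrite -{1}(subnK ik) exprD ler_wpM2r ?exprn_ge0 //.
  by rewrite lerXn2r ?nnegrE // (le_trans p0).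
rewrite subrXX factS natrM.
have kf : 0 < k`!%:R :> R by rewrite ltr0n fact_gt0.
rewrite [X in _ <= X](_ : _ = (q - p) * (\sum_(i < k.+1) q ^+ (k.+1.-1 - i) * p ^+ i)
   / k.+1%:R / k`!%:R); last by rewrite invfM mulrA.
rewrite mulrC mulrA ler_pM2r ?invr_gt0 // ler_pdivlMr ?ltr0n // mulrC.
by rewrite mulrAC [X in X <= _]mulrC ler_wpM2l ?subr_ge0 // mulrC.
Qed.

Section RSIntegral.
Context {R : realType}.
Implicit Types (F G : R -> R) (a u c I J : R).

Lemma is_RS_integral_unique F G a u I J : a <= u ->
  is_RS_integral F G a u I -> is_RS_integral F G a u J -> I = J.
Proof.
move=> au HI HJ; apply/eqP; rewrite -subr_eq0 -normr_le0.
apply/ler_addgt0Pr => e e0; rewrite add0r.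
have [d1 d10 H1] := HI _ (divr_gt0 e0 (ltr0Sn _ 1)).
have [d2 d20 H2] := HJ _ (divr_gt0 e0 (ltr0Sn _ 1)).
have dmin : 0 < Num.min d1 d2 by rewrite lt_min d10 d20.
have [n _ /(_ _ (leqnn n)) mesh] := uniform_partition_mesh a u dmin.
have T := uniform_tagged_partition n au.
have [m1 m2] : mesh_lt n.+1 (uniform_partition a u n) d1 /\
                mesh_lt n.+1 (uniform_partition a u n) d2.
  by split=> i lt_in; apply: lt_le_trans (mesh i lt_in) _; rewrite ge_min lexx ?orbT.
have A1 := H1 _ _ _ T m1; have A2 := H2 _ _ _ T m2.
set S := RS_sum _ _ _ _ _ in A1 A2.
rewrite (_ : I - J = (S - J) - (S - I)); last by ring.
apply: le_trans (ler_normB _ _) _.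
by rewrite [e]splitr; apply: lerD; apply: ltW.
Qed.

Lemma RS_integralE F G a u I : a <= u ->
  is_RS_integral F G a u I -> RS_integral F G a u = I.
Proof.
move=> au HI; apply: (is_RS_integral_unique au _ HI).
by apply: (xgetPex 0 (P := [set I | is_RS_integral F G a u I])); exists I.
Qed.

Lemma RS_integral_undef F G a u :
  ~ (exists I, is_RS_integral F G a u I) -> RS_integral F G a u = 0.
Proof. by move=> NI; apply: xgetPN => I HI; apply: NI; exists I. Qed.

Lemma RS_integral_near_uniform F G a u e : a <= u -> 0 < e ->
  \forall n \near \oo, `|RS_integral F G a u| <=
    `|RS_sum F G n.+1 (uniform_partition a u n) (uniform_partition a u n)| + e.
Proof.
move=> au e0; have [[I HI]|NI] := pselect (exists I, is_RS_integral F G a u I); last first.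
  rewrite RS_integral_undef // normr0; apply: nearW => n.
  exact: addr_ge0 (normr_ge0 _) (ltW e0).
rewrite (RS_integralE au HI); have [delta delta0 HIe] := HI _ e0.
apply: filterS (uniform_partition_mesh a u delta0) => n mesh.
have := HIe _ _ _ (uniform_tagged_partition n au) mesh.
set S := RS_sum _ _ _ _ _ => /ltW SI.
by rewrite -lerBlDl (le_trans (lerB_dist _ _)) // distrC.
Qed.

Lemma is_RS_integral_scale F G F' G' a u c I :
  (forall n t xi, tagged_partition a u n t xi ->
     RS_sum F' G' n t xi = c * RS_sum F G n t xi) ->
  is_RS_integral F G a u I -> is_RS_integral F' G' a u (c * I).
Proof.
move=> Hs HI e e0.
have e1 : 0 < e / (`|c| + 1) by rewrite divr_gt0 // ltr_wpDl.
have [delta delta0 Hd] := HI _ e1.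
exists delta => // n t xi T M; rewrite Hs // -mulrBr normrM.
apply: le_lt_trans (ler_wpM2l (normr_ge0 c) (ltW (Hd _ _ _ T M))) _.
by rewrite mulrA ltr_pdivrMr ?ltr_wpDl // mulrC ltr_pM2l // ltrDl.
Qed.

Lemma RS_integral_scale F G F' G' a u c : a <= u ->
  (forall n t xi, tagged_partition a u n t xi ->
     RS_sum F' G' n t xi = c * RS_sum F G n t xi) ->
  RS_integral F' G' a u = c * RS_integral F G a u.
Proof.
move=> au Hs; have [c0|c0] := eqVneq c 0.
  rewrite c0 mul0r; apply: RS_integralE => // e e0; exists 1 => // n t xi T _.
  by rewrite Hs // c0 mul0r subr0 normr0.
have [[I HI]|NI] := pselect (exists I, is_RS_integral F G a u I).
  by rewrite (RS_integralE au HI); apply/RS_integralE/(is_RS_integral_scale Hs).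
(* the scaling is invertible, so F' dG' is integrable iff F dG is *)
rewrite (RS_integral_undef NI) mulr0; apply: RS_integral_undef => -[J HJ]; apply: NI.
exists (c^-1 * J); apply: is_RS_integral_scale HJ => n t xi T.
by rewrite Hs // mulrA mulVf // mul1r.
Qed.

Lemma l2norm_RS_integral_near {T : finType} (F G : T -> R -> R) a u e :
  a <= u -> 0 < e -> \forall n \near \oo,
    l2norm (fun w => RS_integral (F w) (G w) a u) <=
    l2norm (fun w => RS_sum (F w) (G w) n.+1
                       (uniform_partition a u n) (uniform_partition a u n)) + e.
Proof.
move=> au e0; pose C : R := Num.sqrt #|T|%:R.
have C1 : 0 < C + 1 by rewrite ltr_wpDl ?sqrtr_ge0.
have eps0 : 0 < e / (C + 1) by rewrite divr_gt0.
have epsC : e / (C + 1) * C <= e.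
  by rewrite mulrAC ler_pdivrMr //; apply: ler_wpM2l; [exact: ltW | rewrite lerDl].
have : \forall n \near \oo, forall w, `|RS_integral (F w) (G w) a u| <=
    `|RS_sum (F w) (G w) n.+1 (uniform_partition a u n) (uniform_partition a u n)| +
    e / (C + 1).
  by apply: filter_forall => w; exact: RS_integral_near_uniform.
apply: filterS => n near_n.
apply: le_trans (l2norm_le near_n) _; apply: le_trans (l2normD _ _) _.
rewrite l2norm_norm l2norm_cst ?lerD2l //; exact: ltW.
Qed.

End RSIntegral.

Section SignatureBound.
Context {R : realType} {d : nat}.
Variables (g : R -> 'rV[R]_d) (a b : R).
Hypothesis g_bv : bounded_variation_path g a b.
Local Notation L := (path_length g a).

Lemma sig_rev_cons k (w : k.+1.-tuple 'I_d) u :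
  sig_rev g a w u = RS_integral (sig_rev g a (behead w)) (Defs.coord g (thead w)) a u.
Proof. by case: w => [[|i w] //= _]. Qed.

Lemma l2norm_sig_RS_sum_le k u n t :
  (forall v, a <= v -> v <= b ->
     l2norm (fun w : k.-tuple 'I_d => sig_rev g a w v) <= L v ^+ k / k`!%:R) ->
  Defs.partition a u n t -> u <= b ->
  l2norm (fun w : k.+1.-tuple 'I_d =>
    RS_sum (sig_rev g a (behead w)) (Defs.coord g (thead w)) n t t)
  <= L u ^+ k.+1 / k.+1`!%:R.
Proof.
move=> IH P ub; have [t0 [tn _]] := P.
have t_in j : (j <= n)%N -> a <= t j <= b.
  by move=> /(partition_range P) /andP[-> /le_trans]; apply.
pose incr j (i : 'I_d) := (g (t j.+1) - g (t j)) 0 i.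
have -> : (fun w : k.+1.-tuple 'I_d =>
    RS_sum (sig_rev g a (behead w)) (Defs.coord g (thead w)) n t t) =
    (fun w => \sum_(j < n) sig_rev g a (behead w) (t j) * incr j (thead w)).
  by apply/funext => w; apply: eq_bigr => j _; rewrite /incr /Defs.coord !mxE.
apply: le_trans (l2norm_sum _) _.
apply: le_trans (_ : \sum_(j < n) (L (t j.+1) ^+ k.+1 - L (t j) ^+ k.+1) / k.+1`!%:R
                     <= _).
  apply: ler_sum => j _.
  have /andP[atj tjb] := t_in j (ltnW (ltn_ord j)).
  have /andP[_ tj1b] := t_in j.+1 (ltn_ord j).
  have tjj1 : t j <= t j.+1 by apply: (partition_le P); rewrite leqnSn ltn_ord.
  have L_chord := path_length_chord g_bv atj tjj1 tj1b.
  rewrite (l2norm_tensor k (fun w => sig_rev g a w (t j)) (incr j)).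
  apply: le_trans (_ : L (t j) ^+ k / k`!%:R * (L (t j.+1) - L (t j)) <= _).
    by apply: ler_pM; rewrite ?l2norm_ge0 ?IH // lerBrDl.
  apply: ler_pow_fact_step; first exact: (path_length_ge0 g_bv atj tjb).
  by apply: le_trans L_chord; rewrite lerDl enorm_ge0.
rewrite -mulr_suml -(big_mkord xpredT (fun j => L (t j.+1) ^+ k.+1 - L (t j) ^+ k.+1)).
rewrite telescope_sumr // tn t0 ler_wpM2r ?invr_ge0 ?ler0n // lerBlDr lerDl.
have /andP[_ ab] := t_in 0%N isT; rewrite t0 in ab.
by rewrite exprn_ge0 // (path_length_ge0 g_bv (lexx a) ab).
Qed.

Lemma l2norm_sig_rev_le k u : a <= u -> u <= b ->
  l2norm (fun w : k.-tuple 'I_d => sig_rev g a w u) <= L u ^+ k / k`!%:R.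
Proof.
elim: k u => [|k IH] u au ub.
  rewrite (eq_l2norm (h := fun=> 1)) => [|w]; last by rewrite (tuple0 w).
  by rewrite l2norm_cst // card_tuple expn0 sqrtr1 mulr1 expr0 divr1.
apply/ler_addgt0Pr => e e0; rewrite (eq_l2norm (fun w => sig_rev_cons w u)).
have [n _ /(_ _ (leqnn n)) RS_near] := l2norm_RS_integral_near
  (fun w : k.+1.-tuple 'I_d => sig_rev g a (behead w))
  (fun w => Defs.coord g (thead w)) au e0.
apply: le_trans RS_near _; rewrite lerD2r.
apply: l2norm_sig_RS_sum_le IH _ ub.
exact/tagged_partition_partition/uniform_tagged_partition.
Qed.

End SignatureBound.

Lemma sig_rev_scale {R : realType} {d : nat} (g : R -> 'rV[R]_d) a x (w : seq 'I_d) u :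
  a <= u -> sig_rev (fun v => x *: g v) a w u = x ^+ size w * sig_rev g a w u.
Proof.
elim: w u => [|i w IH] u au /=; first by rewrite mulr1.
apply: RS_integral_scale => // n t xi T.
rewrite /RS_sum mulr_sumr; apply: eq_bigr => j _.
have /andP[axi _] := tagged_partition_tag_range T (ltn_ord j).
by rewrite IH // /Defs.coord !mxE exprS; ring.
Qed.

Section SeriesDomination.
Context {R : realType}.
Implicit Types u v : R ^nat.

Lemma series_norm_le_cvg u v : cvgn (series v) -> (forall l, `|u l| <= v l) ->
  cvgn [normed series u].
Proof.
move=> cv uv; have v_ge0 l : 0 <= v l := le_trans (normr_ge0 _) (uv l).
exact: series_le_cvg (fun l => normr_ge0 (u l)) v_ge0 uv cv.
Qed.

Lemma ler_norm_lim_series u v : cvgn (series v) -> (forall l, `|u l| <= v l) ->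
  `|limn (series u)| <= limn (series v).
Proof.
move=> cv uv; have cu := series_norm_le_cvg cv uv.
exact: le_trans (lim_series_norm cu) (lim_series_le cu cv uv).
Qed.

Lemma series_exp_coeff_le_cvg u (K y : R) :
  (forall l, `|u l| <= K * (y ^+ l / l`!%:R)) -> cvgn (series u).
Proof.
move=> uv; apply: normed_cvg.
exact: series_norm_le_cvg (is_cvg_seriesZ (k := K) (is_cvg_series_exp_coeff y)) uv.
Qed.

End SeriesDomination.

Lemma natr_fact_neq0 {R : numDomainType} n : n`!%:R != 0 :> R.
Proof. by rewrite pnatr_eq0 -lt0n fact_gt0. Qed.

Lemma ler_invr_factM {R : realFieldType} m n : (m`!%:R * n`!%:R)^-1 <= m`!%:R^-1 :> R.
Proof.
rewrite lef_pV2 ?posrE ?mulr_gt0 ?ltr0n ?fact_gt0 //.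
by rewrite ler_peMr ?ler0n // ler1n fact_gt0.
Qed.

Definition pseries_sum {R : realType} (c : R ^nat) (x : R) : R := limn (pseries c x).

Lemma iter_pseries_diffsE {R : realType} (c : R ^nat) j l :
  iter j (@pseries_diffs R) c l = (l + j)`!%:R / l`!%:R * c (l + j)%N.
Proof.
elim: j l => [|j IH] l /=; first by rewrite addn0 divff ?mul1r // natr_fact_neq0.
rewrite /pseries_diffs IH addSnnS [l.+1`!]factS natrM.
by field; rewrite natr_fact_neq0 nat1r pnatr_eq0.
Qed.

Section EntirePowerSeries.
Context {R : realType}.
Variables (c : R ^nat) (M : R).
Hypothesis c_le : forall k, `|c k| <= M ^+ k / k`!%:R.

Lemma cvg_pseries_iter_diffs j x : cvgn (pseries (iter j (@pseries_diffs R) c) x).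
Proof.
apply: (series_exp_coeff_le_cvg (K := M ^+ j) (y := M * `|x|)) => l.
have -> : M ^+ j * ((M * `|x|) ^+ l / l`!%:R) =
    (l + j)`!%:R / l`!%:R * (M ^+ (l + j) / (l + j)`!%:R) * `|x| ^+ l.
  by rewrite exprMn exprD; field; rewrite !natr_fact_neq0.
rewrite /= iter_pseries_diffsE normrM normrX normrM ger0_norm ?divr_ge0 //.
apply: ler_wpM2r; first exact: exprn_ge0.
by apply: ler_wpM2l; [rewrite divr_ge0 | exact: c_le].
Qed.

Lemma is_derive_pseries_sum j (x : R) :
  is_derive x (1 : R) (pseries_sum (iter j (@pseries_diffs R) c))
    (pseries_sum (iter j.+1 (@pseries_diffs R) c) x).
Proof.
apply: (@pseries_snd_diffs R _ (`|x| + 1)).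
- exact: (cvg_pseries_iter_diffs (j := j)).
- exact: (cvg_pseries_iter_diffs (j := j.+1)).
- exact: (cvg_pseries_iter_diffs (j := j.+2)).
- by rewrite [ltRHS]ger0_norm ?addr_ge0 // ltrDl.
Qed.

Lemma derive1n_pseries_sum j :
  derive1n j (pseries_sum c) = pseries_sum (iter j (@pseries_diffs R) c).
Proof.
elim: j => [|j IH]; first by rewrite derive1n0.
apply/funext => x; have D := is_derive_pseries_sum j x.
by rewrite derive1nS IH derive1E derive_val.
Qed.

End EntirePowerSeries.

Lemma norm_pseries_sum_iter_diffs_le {R : realType} (c : R ^nat) (M : R) :
  0 <= M -> (forall k, `|c k| <= M ^+ k / k`!%:R ^+ 2) -> forall j x,
  `|pseries_sum (iter j (@pseries_diffs R) c) x| <=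
  limn (series (fun l => M ^+ (l + j) / (l`!%:R * (l + j)`!%:R) * `|x| ^+ l)).
Proof.
move=> M_ge0 c_le j x; apply: ler_norm_lim_series => [|l].
  apply: (series_exp_coeff_le_cvg (K := M ^+ j) (y := M * `|x|)) => l.
  have -> : M ^+ j * ((M * `|x|) ^+ l / l`!%:R) = M ^+ (l + j) / l`!%:R * `|x| ^+ l.
    by rewrite exprMn exprD; field; rewrite natr_fact_neq0.
  rewrite ger0_norm ?mulr_ge0 ?divr_ge0 ?exprn_ge0 //.
  apply: ler_wpM2r; first exact: exprn_ge0.
  by apply: ler_wpM2l; [exact: exprn_ge0 | exact: ler_invr_factM].
rewrite /= iter_pseries_diffsE normrM normrX normrM ger0_norm ?divr_ge0 //.
apply: ler_wpM2r; first exact: exprn_ge0.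
apply: le_trans (ler_wpM2l _ (c_le _)) _; first by rewrite divr_ge0.
have -> : (l + j)`!%:R / l`!%:R * (M ^+ (l + j) / (l + j)`!%:R ^+ 2) =
    M ^+ (l + j) / (l`!%:R * (l + j)`!%:R) by field; rewrite !natr_fact_neq0.
exact: lexx.
Qed.

Lemma powR_half {R : realType} (y : R) (k : nat) : 0 <= y ->
  powR y (k%:R / 2) = Num.sqrt y ^+ k.
Proof.
by move=> y0; rewrite mulrC powRrM powR12_sqrt // powR_mulrn // sqrtr_ge0.
Qed.

Lemma is_cvg_bessel_series {R : realType} (k : nat) (z : R) : 0 <= z ->
  cvgn (series (fun m => z ^+ m / (m`!%:R * (m + k)`!%:R))).
Proof.
move=> z0; apply: (series_exp_coeff_le_cvg (K := 1) (y := z)) => m.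
rewrite mul1r ger0_norm ?divr_ge0 ?exprn_ge0 //.
by apply: ler_wpM2l; [exact: exprn_ge0 | exact: ler_invr_factM].
Qed.

Lemma besselI_sqrt {R : realType} (k : nat) (z : R) : 0 <= z ->
  besselI k (2 * Num.sqrt z) =
  Num.sqrt z ^+ k * limn (series (fun m => z ^+ m / (m`!%:R * (m + k)`!%:R))).
Proof.
move=> z0; rewrite /besselI -[RHS]/(Num.sqrt z ^+ k *: limn (series _)).
rewrite -lim_seriesZ; last exact: is_cvg_bessel_series.
congr (limn (series _)); apply/funext => m /=.
rewrite [2 * _]mulrC mulfK // exprD exprM sqr_sqrtr //.
rewrite (_ : (_ *: _) m = Num.sqrt z ^+ k * (z ^+ m / (m`!%:R * (m + k)`!%:R))) //.
by rewrite -mulrA [RHS]mulrCA.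
Qed.

(* the closed form of the majorant of [f^(k)(x)]: for [z = y p q] one has
   [(p q)^(l + k) y^l = (sqrt p sqrt q / sqrt y)^k sqrt z^k z^l] *)
Lemma bessel_majorantE {R : realType} (p q y : R) (k : nat) :
  0 <= p -> 0 <= q -> 0 <= y -> y != 0 \/ k = 0%N ->
  limn (series (fun l => (p * q) ^+ (l + k) / (l`!%:R * (l + k)`!%:R) * y ^+ l)) =
  powR p (k%:R / 2) * powR q (k%:R / 2) / powR y (k%:R / 2) *
    besselI k (2 * Num.sqrt (y * p * q)).
Proof.
move=> p0 q0 y0 yk; rewrite !powR_half // besselI_sqrt ?mulr_ge0 // mulrA.
have -> : Num.sqrt p ^+ k * Num.sqrt q ^+ k / Num.sqrt y ^+ k *
    Num.sqrt (y * p * q) ^+ k = (p * q) ^+ k.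
  case: yk => [y_neq0|->]; last by rewrite !expr0 invr1 !mulr1.
  have sy_neq0 : Num.sqrt y != 0 by rewrite sqrtr_eq0 -ltNge lt0r y_neq0.
  rewrite !sqrtrM ?mulr_ge0 // -exprVn -!exprMn; congr (_ ^+ k).
  by rewrite -[p in RHS]sqr_sqrtr // -[q in RHS]sqr_sqrtr //; field.
rewrite -[RHS]/((p * q) ^+ k *: limn (series _)).
rewrite -lim_seriesZ; last by apply: is_cvg_bessel_series; rewrite !mulr_ge0.
congr (limn (series _)); apply/funext => l /=.
rewrite (_ : (_ *: _) l = (p * q) ^+ k * ((y * p * q) ^+ l / (l`!%:R * (l + k)`!%:R))) //.
by rewrite exprD !exprMn; field; rewrite !natr_fact_neq0.
Qed.

Section SignatureInner.
Context {R : realType} {d : nat}.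
Implicit Types (g h : R -> 'rV[R]_d) (a s t : R).

Lemma l2norm_sig_coef g a s k :
  l2norm (fun w : k.-tuple 'I_d => sig_coef g a s w) =
  l2norm (fun w : k.-tuple 'I_d => sig_rev g a w s).
Proof.
have revK : involutive (@rev_tuple k 'I_d) by move=> w; apply: val_inj; rewrite /= revK.
by rewrite /l2norm [in RHS](reindex_inj (inv_inj revK)).
Qed.

Lemma sig_inner_le g h a b s t :
  bounded_variation_path g a b -> bounded_variation_path h a b ->
  a <= s -> s <= b -> a <= t -> t <= b -> forall k,
  `|sig_inner g h a s t k| <=
    (path_length g a s * path_length h a t) ^+ k / k`!%:R ^+ 2.
Proof.
move=> g_bv h_bv aS sb aT tb k; apply: le_trans (ler_norm_sum _ _ _) _.
under eq_bigr do rewrite normrM.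
apply: le_trans (ler_sum_mul_l2norm _ _) _.
rewrite !l2norm_norm !l2norm_sig_coef exprMn expr2 invfM mulrACA.
by apply: ler_pM; rewrite ?l2norm_ge0 ?(l2norm_sig_rev_le g_bv) ?(l2norm_sig_rev_le h_bv).
Qed.

Lemma sig_innerZl g h a s t x k : a <= s ->
  sig_inner (fun u => x *: g u) h a s t k = sig_inner g h a s t k * x ^+ k.
Proof.
move=> aS; rewrite /sig_inner mulr_suml; apply: eq_bigr => w _.
by rewrite /sig_coef sig_rev_scale // size_rev size_tuple; ring.
Qed.

End SignatureInner.

Theorem mainTheorem15 (R : realType) (d : nat) (a b : R)
  (gamma sigma : R -> 'rV[R]_d) (s t : R) :
  {within `[a, b], continuous gamma} ->
  {within `[a, b], continuous sigma} ->
  bounded_variation_path gamma a b ->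
  bounded_variation_path sigma a b ->
  s \in `[a, b] -> t \in `[a, b] ->
  let f := fun x : R => sig_kernel (fun u => x *: gamma u) sigma a s t in
  (forall (k : nat) (x : R), derivable (derive1n k f) x 1) /\
  (forall (k : nat) (x : R),
     series (fun l : nat => x ^+ l * ((l + k)`!%:R / (l`!)%:R)
                            * sig_inner gamma sigma a s t (l + k))
       @ \oo --> derive1n k f x) /\
  (forall (k : nat) (x : R), x != 0 \/ k = 0%N ->
     `|derive1n k f x| <=
       powR (path_length gamma a s) (k%:R / 2) * powR (path_length sigma a t) (k%:R / 2)
       / powR `|x| (k%:R / 2)
       * besselI k (2 * Num.sqrt (`|x| * path_length gamma a s * path_length sigma a t))).
Proof.
move=> _ _ gamma_bv sigma_bv /[!in_itv] /andP[aS sb] /andP[aT tb] f.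
set c := sig_inner gamma sigma a s t.
have Lg_ge0 := path_length_ge0 gamma_bv aS sb.
have Ls_ge0 := path_length_ge0 sigma_bv aT tb.
have M_ge0 := mulr_ge0 Lg_ge0 Ls_ge0.
have c_le := sig_inner_le gamma_bv sigma_bv aS sb aT tb.
have c_le_exp k : `|c k| <= (path_length gamma a s * path_length sigma a t) ^+ k / k`!%:R.
  apply: le_trans (c_le k) _; apply: ler_wpM2l; first exact: exprn_ge0.
  by rewrite expr2; exact: ler_invr_factM.
have -> : f = pseries_sum c.
  apply/funext => x; rewrite /f /sig_kernel /pseries_sum /pseries.
  by congr (limn (series _)); apply/funext => n; rewrite /= sig_innerZl.
split; [|split] => k x; rewrite (derive1n_pseries_sum c_le_exp).
- have D := is_derive_pseries_sum c_le_exp k x; exact: ex_derive.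
- have -> : (fun l => x ^+ l * ((l + k)`!%:R / l`!%:R) * c (l + k)%N) =
      [sequence iter k (@pseries_diffs R) c l * x ^+ l]_l.
    by apply/funext => l; rewrite /= iter_pseries_diffsE; ring.
  exact: (cvg_pseries_iter_diffs c_le_exp (j := k)).
- move=> xk; apply: le_trans (norm_pseries_sum_iter_diffs_le M_ge0 c_le k x) _.
  by rewrite bessel_majorantE // ?normr_ge0 // normr_eq0.
Qed.
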